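(* Let $\mathcal{H}=(Q_0,Q_1,\beta)$ be a directed tensor-labeled hypergraph over $\mathbb{R}$ and $k\ge0$. The operator $L_{\le k}:=(\pi_{\le k}\partial_\beta)^*(\pi_{\le k}\partial_\beta)$ on $\mathbb{R}^{Q_1}$ satisfies: (1) $L_{\le k}$ is symmetric positive semi-definite; (2) $\mathrm{Ker}(L_{\le k})=\mathcal{Z}_{\le k}(\mathcal{H})$; (3) $\mathrm{rank}(L_{\le k})=|V_{\mathrm{macro}}|-c_{\mathrm{macro}}-\delta_{\le k}(\mathcal{H})$; (4) if $k\le\ell$ then $L_{\le k}\preceq L_{\le\ell}$ in the Loewner order, and writing the eigenvalues of $L_{\le k}$ in ascending order $0\le\lambda_1^{(k)}\le\cdots\le\lambda_{|Q_1|}^{(k)}$, one has $\lambda_i^{(k)}\le\lambda_i^{(\ell)}$ for all $i$.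
   Context: $T(\mathbb{R}^{Q_0})=\bigoplus_{k\ge0}T^k$, $T^k=(\mathbb{R}^{Q_0})^{\otimes k}$, with the inner product making the standard tensor basis orthonormal (distinct degrees orthogonal); $\pi_{\le k}$ is the orthogonal projection onto $\bigoplus_{j\le k}T^j$. $\mathbb{R}^{Q_1}$ has the standard inner product. A directed tensor-labeled hypergraph is $\mathcal{H}=(Q_0,Q_1,\beta)$ ($Q_0,Q_1$ finite) with $\beta:\mathbb{R}^{Q_1}\to T\times T$ linear, $\beta(\mathbf{1}_e)=(A_e,B_e)$; $\partial_\beta:\mathbf{1}_e\mapsto B_e-A_e$; $^*$ denotes adjoint. $\mathcal{Z}_{\le k}(\mathcal{H})=\mathrm{Ker}(\pi_{\le k}\circ\partial_\beta)$. $V_{\mathrm{macro}}=\{A_e\}\cup\{B_e\}$; macrograph on $V_{\mathrm{macro}}$ with edges $Q_1$, $e:A_e\to B_e$, $c_{\mathrm{macro}}$ its number of weakly connected components; $B_{\mathrm{macro}}:\mathbf{1}_e\mapsto\mathbf{1}_{B_e}-\mathbf{1}_{A_e}$; $\hat\phi:\mathbb{R}^{V_{\mathrm{macro}}}\to T(\mathbb{R}^{Q_0})$, $\mathbf{1}_w\mapsto w$; $\delta_{\le k}(\mathcal{H})=\dim(\mathrm{Im}B_{\mathrm{macro}}\cap\mathrm{Ker}(\pi_{\le k}\circ\hat\phi))$. *)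

From mathcomp Require Import all_boot all_order all_algebra.
From mathcomp Require Export reals.
Set Implicit Arguments. Unset Strict Implicit. Unset Printing Implicit Defensive.
Import Order.TTheory GRing.Theory Num.Theory.
Local Open Scope ring_scope.

(* Q_0 = 'I_q.  Words over Q_0 of length <= D: a word of length d is a
   d.-tuple of vertices.  These index the standard (orthonormal) tensor basis
   of  \bigoplus_{j <= D} T^j  inside  T(R^{Q_0}). *)
Notation word q D := {d : 'I_D.+1 & (val d).-tuple 'I_q}.
Definition tdim (q D : nat) : nat := #|{: word q D}|.

Definition wdeg (q D : nat) (j : 'I_(tdim q D)) : nat :=
  val (tag (@enum_val (word q D) predT j)).

Section Defs.
Variables (R : realType) (q D m : nat).
(* Q_1 = 'I_m ; beta(1_e) = (A_e, B_e) with A_e = col e A, B_e = col e B. *)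
Variables (A B : 'M[R]_(tdim q D, m)).

Definition proj (k : nat) : 'M[R]_(tdim q D) :=
  diag_mx (\row_j ((wdeg j <= k)%N)%:R).

(* matrix of  pi_{<=k} o partial_beta  (partial_beta 1_e = B_e - A_e) *)
Definition pbnd (k : nat) : 'M[R]_(tdim q D, m) := proj k *m (B - A).

(* L_{<=k} = (pi_{<=k} partial)^* (pi_{<=k} partial); adjoint = transpose
   for the standard inner products. *)
Definition Lap (k : nat) : 'M[R]_m := (pbnd k)^T *m pbnd k.

Definition Vmac : seq 'cV[R]_(tdim q D) :=
  undup ([seq col e A | e <- enum 'I_m] ++ [seq col e B | e <- enum 'I_m]).

Definition macro_adj : rel 'I_(size Vmac) := fun i j =>
  [exists e : 'I_m,
     ((index (col e A) Vmac == i) && (index (col e B) Vmac == j))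
  || ((index (col e A) Vmac == j) && (index (col e B) Vmac == i))].

Definition c_macro : nat := n_comp macro_adj predT.

Definition Bmac : 'M[R]_(size Vmac, m) :=
  \matrix_(i, e) (((i : nat) == index (col e B) Vmac)%:R
                  - ((i : nat) == index (col e A) Vmac)%:R).

Definition Phimac : 'M[R]_(tdim q D, size Vmac) :=
  \matrix_(j, i) (nth 0 Vmac i) j 0.

(* delta_{<=k} = dim (Im B_macro  cap  Ker (pi_{<=k} o phi_hat)),
   subspaces of R^{V_macro} written as row spaces *)
Definition delta (k : nat) : nat :=
  \rank ((Bmac)^T :&: kermx ((proj k *m Phimac)^T))%MS.
End Defs.

Section Spec.
Variables (R : realType) (m : nat).
Definition sym_mx (M : 'M[R]_m) : Prop := M^T = M.
Definition psd (M : 'M[R]_m) : Prop :=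
  forall x : 'cV[R]_m, 0 <= (x^T *m M *m x) 0 0.
Definition loewner_le (M1 M2 : 'M[R]_m) : Prop := psd (M2 - M1).
Definition eig_asc (M : 'M[R]_m) (s : seq R) : Prop :=
  [/\ size s = m, sorted <=%R s & char_poly M = \prod_(x <- s) ('X - x%:P)].
End Spec.

From mathcomp Require Import all_boot all_order all_algebra zify.
From mathcomp Require Import reals complex.
Import Order.TTheory GRing.Theory Num.Theory.
Local Open Scope ring_scope.
Local Open Scope sesquilinear_scope.
Set Implicit Arguments. Unset Strict Implicit. Unset Printing Implicit Defensive.

(* L_k is the Gram matrix of X_k = pi_k (B - A): this gives symmetry,
   positive semi-definiteness, Ker L_k = Ker X_k and rank L_k = rank X_k.
   As B - A = Phi_hat B_macro and B_macro is the incidence matrix of the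
   macrograph, of rank |V_macro| - c_macro, the rank of a product gives
   rank X_k = rank B_macro - delta_k.  For k <= l, L_l - L_k is
   (B - A)^T (pi_l - pi_k) (B - A) with pi_l - pi_k diagonal with 0/1 entries.
   Eigenvalue monotonicity is a counting argument: if L_l had more
   eigenvalues <= t than L_k, its eigenvectors for them would span a space
   meeting the span of the eigenvectors of L_k for eigenvalues > t, and a
   common x <> 0 would give t |x|^2 < x^* L_k x <= x^* L_l x <= t |x|^2.
   Eigenvectors are taken over R[i], where the spectral theorem for
   hermitian matrices is available. *)

Section Gram.
Variables (R : realFieldType) (p n : nat) (X : 'M[R]_(p, n)).

Lemma gram_form (x : 'cV[R]_n) :
  (x^T *m (X^T *m X) *m x) 0 0 = \sum_i (X *m x) i 0 ^+ 2.
Proof.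
rewrite mulmxA -trmx_mul -mulmxA mxE; apply: eq_bigr => i _.
by rewrite mxE expr2.
Qed.

Lemma gram_mulmx_eq0 (x : 'cV[R]_n) : X^T *m X *m x = 0 <-> X *m x = 0.
Proof.
split=> [Gx0|Xx0]; last by rewrite -mulmxA Xx0 mulmx0.
have /psumr_eq0P sq0 : \sum_i (X *m x) i 0 ^+ 2 = 0.
  by rewrite -gram_form -mulmxA Gx0 mulmx0 mxE.
apply/matrixP => i j; rewrite ord1 [RHS]mxE.
by apply/eqP; rewrite -sqrf_eq0 sq0 // => l _; apply: sqr_ge0.
Qed.

Lemma kermx_gram : (kermx (X^T *m X) :=: kermx X^T)%MS.
Proof.
suff kerE r (Y : 'M_(r, n)) : Y *m (X^T *m X) = 0 -> Y *m X^T = 0.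
  apply/eqmxP/andP; split; rewrite sub_kermx; apply/eqP; last first.
    by rewrite mulmxA mulmx_ker mul0mx.
  exact/kerE/mulmx_ker.
move=> YG0; apply/row_matrixP => i; rewrite row_mul row0.
have /(congr1 trmx) := congr1 (row i) YG0.
rewrite row_mul row0 !trmx_mul !trmxK trmx0 => /gram_mulmx_eq0 Xy0.
by rewrite -[_ *m _]trmxK trmx_mul trmxK Xy0 trmx0.
Qed.

Lemma mxrank_gram : \rank (X^T *m X) = \rank X.
Proof.
have := mxrank_ker (X^T *m X); rewrite kermx_gram mxrank_ker mxrank_tr.
have := rank_leq_row X^T; have := rank_leq_row (X^T *m X); rewrite mxrank_tr.
lia.
Qed.
End Gram.

Section Psd.
Variable R : realType.

Lemma psd_gram p n (X : 'M[R]_(p, n)) : psd (X^T *m X).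
Proof.
by move=> x; rewrite gram_form; apply: sumr_ge0 => i _; apply: sqr_ge0.
Qed.

Lemma psd_diag_mx n (d : 'rV[R]_n) : (forall i, 0 <= d 0 i) -> psd (diag_mx d).
Proof.
move=> d_ge0 x; rewrite mul_mx_diag mxE; apply: sumr_ge0 => i _.
by rewrite !mxE mulrAC -expr2 mulr_ge0 ?sqr_ge0.
Qed.

Lemma psd_conj p n (M : 'M[R]_p) (X : 'M[R]_(p, n)) :
  psd M -> psd (X^T *m M *m X).
Proof.
move=> psdM x.
have -> : x^T *m (X^T *m M *m X) *m x = (X *m x)^T *m M *m (X *m x).
  by rewrite trmx_mul !mulmxA.
exact: psdM.
Qed.
End Psd.

Section Incidence.
Variables (F : fieldType) (n m : nat) (s t : 'I_m -> 'I_n).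

Definition incidence_mx : 'M[F]_(n, m) := colsub t 1%:M - colsub s 1%:M.

Definition incidence_rel : rel 'I_n :=
  fun i j => [exists e, (s e == i) && (t e == j) || (s e == j) && (t e == i)].

Local Notation root := (fingraph.root incidence_rel).
Local Notation roots := (fingraph.roots incidence_rel).

Lemma incidence_rel_sym : symmetric incidence_rel.
Proof. by move=> i j; apply: eq_existsb => e; rewrite orbC. Qed.

Lemma mulmx_incidence p (Y : 'M[F]_(p, n)) :
  Y *m incidence_mx = colsub t Y - colsub s Y.
Proof. by rewrite mulmxBr !mulmx_colsub mulmx1. Qed.

Lemma incidence_ker_connect (y : 'rV[F]_n) i j :
  y *m incidence_mx = 0 -> connect incidence_rel i j -> y 0 i = y 0 j.
Proof.
rewrite mulmx_incidence => /matrixP y0 /connectP [p + ->] {j}.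
have yst e : y 0 (s e) = y 0 (t e).
  by have /eqP := y0 0 e; rewrite !mxE subr_eq0 => /eqP.
elim: p i => [|a p IHp] i //= /andP [/existsP [e adj_e] /IHp <-].
by case/orP: adj_e => /andP [/eqP <- /eqP <-].
Qed.

Definition component_mx : 'M[F]_(#|roots|, n) :=
  \matrix_(r, j) (enum_val r == root j)%:R.

Lemma mxrank_component : \rank component_mx = #|roots|.
Proof.
have inv : component_mx *m colsub enum_val 1%:M = 1%:M.
  rewrite mulmx_colsub mulmx1; apply/matrixP => r r'; rewrite !mxE.
  by have /eqP -> := enum_valP r'; rewrite (inj_eq enum_val_inj).
apply/eqP; rewrite eqn_leq rank_leq_row -{1}(mxrank1 F #|roots|) -inv.
exact: mxrankM_maxl.
Qed.

Lemma kermx_incidence : (kermx incidence_mx :=: component_mx)%MS.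
Proof.
have symE := sym_connect_sym incidence_rel_sym.
apply/eqmxP/andP; split.
  apply/row_subP => i; set y := row i _.
  have y0 : y *m incidence_mx = 0 by rewrite -row_mul mulmx_ker row0.
  clearbody y; apply/submxP; exists (colsub enum_val y); apply/rowP => j.
  rewrite !mxE; under eq_bigr do rewrite !mxE.
  rewrite -(big_enum_val (A := roots) (fun x => y 0 x * (x == root j)%:R)).
  rewrite (bigD1 (root j)) ?inE ?roots_root //= eqxx mulr1 big1 ?addr0.
    exact: incidence_ker_connect y0 (connect_root _ j).
  by move=> x /andP [_ /negPf ->]; rewrite mulr0.
rewrite sub_kermx mulmx_incidence; apply/eqP/matrixP => r e; rewrite !mxE.
have /(fingraph.rootP symE) -> : connect incidence_rel (s e) (t e).
  by apply/connect1/existsP; exists e; rewrite !eqxx.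
by rewrite subrr.
Qed.

Lemma mxrank_incidence :
  \rank incidence_mx = (n - n_comp incidence_rel predT)%N.
Proof.
have := mxrank_ker incidence_mx; rewrite kermx_incidence mxrank_component.
have -> : n_comp incidence_rel predT = #|roots|.
  by apply: eq_card => i; rewrite !inE andbT.
have := rank_leq_row incidence_mx; lia.
Qed.
End Incidence.

Lemma count_enum (T : finType) (p : pred T) : count p (enum T) = #|p|.
Proof. by rewrite enumT cardE /enum_mem size_filter. Qed.

Section SortedCount.
Variables (R : realDomainType) (s : seq R).
Hypothesis s_sorted : sorted <=%R s.

Lemma sorted_nth_le i j : (i <= j < size s)%N -> s`_i <= s`_j.
Proof.
case/andP=> le_ij lt_js; apply: (sorted_leq_nth le_trans lexx) => //.
  by rewrite inE (leq_ltn_trans le_ij).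
Qed.

Lemma count_le_nth i :
  (i < size s)%N -> (i < count (fun x => (x <= s`_i)%R) s)%N.
Proof.
move=> lt_is; have size_take : size (take i.+1 s) = i.+1 by rewrite size_takel.
have : all (fun x => x <= s`_i) (take i.+1 s).
  apply/(all_nthP 0) => j; rewrite size_take => lt_ji.
  by rewrite nth_take // sorted_nth_le // -ltnS lt_ji.
rewrite -[X in count _ X](cat_take_drop i.+1) count_cat all_count size_take.
by move=> /eqP ->; apply: leq_addr.
Qed.

Lemma count_le_lt_nth i t :
  (i < size s)%N -> t < s`_i -> (count (fun x => (x <= t)%R) s <= i)%N.
Proof.
move=> lt_is lt_t; have : ~~ has (fun x => x <= t) (drop i s).
  apply/(has_nthP 0) => -[j]; rewrite size_drop nth_drop => lt_j; apply/negP.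
  rewrite -ltNge (lt_le_trans lt_t) // sorted_nth_le // leq_addr /=.
  by rewrite -ltn_subRL.
rewrite -[X in count _ X](cat_take_drop i) count_cat has_count -leqNgt leqn0.
move=> /eqP ->; rewrite addn0 (leq_trans (count_size _ _)) //.
by rewrite size_take lt_is.
Qed.
End SortedCount.

Lemma sorted_nth_le_count (R : realDomainType) (s1 s2 : seq R) i :
  sorted <=%R s1 -> sorted <=%R s2 -> size s1 = size s2 -> (i < size s1)%N ->
  (forall t, count (fun x => (x <= t)%R) s2
             <= count (fun x => (x <= t)%R) s1)%N ->
  s1`_i <= s2`_i.
Proof.
move=> sorted1 sorted2 size12 lt_i count_le; rewrite leNgt; apply/negP => lt21.
have := leq_trans (count_le_nth sorted2 _) (count_le s2`_i).
rewrite -size12 => /(_ lt_i); apply/negP; rewrite -leqNgt.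
exact: count_le_lt_nth.
Qed.

Lemma char_poly_conj (F : fieldType) n (P M : 'M[F]_n) :
  P \in unitmx -> char_poly (invmx P *m M *m P) = char_poly M.
Proof.
move=> Pu; pose Pc := map_mx polyC P; pose iPc := map_mx polyC (invmx P).
have iPcK : iPc *m Pc = 1%:M by rewrite -map_mxM mulVmx // map_mx1.
have PcK : Pc *m iPc = 1%:M by rewrite -map_mxM mulmxV // map_mx1.
rewrite /char_poly.
have -> : char_poly_mx (invmx P *m M *m P) = iPc *m char_poly_mx M *m Pc.
  rewrite /char_poly_mx !map_mxM mulmxBr mulmxBl scalar_mxC.
  by rewrite -[_ *m iPc *m Pc]mulmxA iPcK mulmx1.
by rewrite !det_mulmx mulrC mulrA -det_mulmx PcK det1 mul1r.
Qed.

Lemma trmxC_mul (C : numClosedFieldType) m n p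
    (X : 'M[C]_(m, n)) (Y : 'M[C]_(n, p)) :
  (X *m Y)^t* = Y^t* *m X^t*.
Proof. by rewrite trmx_mul map_mxM. Qed.

Section UnitaryDiagonalization.
Variables (C : numClosedFieldType) (n : nat) (P : 'M[C]_n).
Hypothesis P_unitary : P \is unitarymx.

Implicit Types (d x : 'rV[C]_n) (t : C).

Let PPt : P *m P^t* = 1%:M. Proof. exact/unitarymxP. Qed.

Lemma unitary_diag_form d x :
  (x *m (invmx P *m diag_mx d *m P) *m x^t*) 0 0
    = \sum_j `|(x *m P^t*) 0 j| ^+ 2 * d 0 j.
Proof.
rewrite invmx_unitary //.
have -> : x *m (P^t* *m diag_mx d *m P) *m x^t*
          = x *m P^t* *m diag_mx d *m (x *m P^t*)^t*.
  by rewrite trmxC_mul trmxCK !mulmxA.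
rewrite mul_mx_diag mxE; apply: eq_bigr => j _.
by rewrite !mxE normCK mulrAC.
Qed.

Lemma unitary_diag_shift_form d x t :
  (x *m (invmx P *m diag_mx d *m P - t%:M) *m x^t*) 0 0
    = \sum_j `|(x *m P^t*) 0 j| ^+ 2 * (d 0 j - t).
Proof.
have -> : invmx P *m diag_mx d *m P - t%:M
          = invmx P *m diag_mx (d - const_mx t) *m P.
  rewrite linearB /= diag_const_mx mulmxBr mulmxBl scalar_mxC.
  by rewrite -[_ *m invmx P *m P]mulmxA mulVmx ?unitarymx_unit // mulmx1.
by rewrite unitary_diag_form; apply: eq_bigr => j _; rewrite !mxE.
Qed.

(* For L = invmx P *m diag_mx d *m P, these are the eigenvectors of L (acting
   on row vectors) for the eigenvalues d 0 j, j \in S. *)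
Definition eigenrows (S : {pred 'I_n}) : 'M[C]_(#|S|, n) :=
  rowsub (enum_val (A := S)) P.

Lemma mxrank_eigenrows S : \rank (eigenrows S) = #|S|.
Proof.
apply: mxrank_unitary; apply/unitarymxP/matrixP => r r'.
have /matrixP/(_ (enum_val r) (enum_val r')) := PPt.
rewrite !mxE (inj_eq enum_val_inj) => <-.
by apply: eq_bigr => j _; rewrite !mxE.
Qed.

Lemma eigenrows_coord S x j :
  (x <= eigenrows S)%MS -> j \notin S -> (x *m P^t*) 0 j = 0.
Proof.
move=> /submxP [v ->] jNS; rewrite -mulmxA mul_rowsub_mx PPt.
rewrite mxE big1 // => r _; rewrite !mxE.
by case: eqP => [rj|]; [rewrite -rj enum_valP in jNS | rewrite mulr0].
Qed.

Lemma eigenrows_shift_form_le0 d t x :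
  (x <= eigenrows [pred j | (d 0 j <= t)%R])%MS ->
  (x *m (invmx P *m diag_mx d *m P - t%:M) *m x^t*) 0 0 <= 0.
Proof.
move=> xS; rewrite unitary_diag_shift_form; apply: sumr_le0 => j _.
have [le_dt|jNS] := boolP (d 0 j <= t).
  by rewrite mulr_ge0_le0 ?exprn_ge0 // subr_le0.
by rewrite (eigenrows_coord xS) ?inE // normr0 expr0n mul0r.
Qed.

Lemma eigenrows_shift_form_gt0 d t x : x != 0 ->
  (x <= eigenrows [pred j | (t < d 0 j)%R])%MS ->
  0 < (x *m (invmx P *m diag_mx d *m P - t%:M) *m x^t*) 0 0.
Proof.
move=> x_neq0 xS; rewrite unitary_diag_shift_form.
have term_ge0 j : 0 <= `|(x *m P^t*) 0 j| ^+ 2 * (d 0 j - t).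
  have [lt_td|] := boolP (t < d 0 j).
    by rewrite mulr_ge0 ?exprn_ge0 // subr_ge0 ltW.
  by move=> jNS; rewrite (eigenrows_coord xS) ?inE // normr0 expr0n mul0r.
have /rV0Pn [j0 y_j0] : x *m P^t* != 0.
  apply: contraNneq x_neq0 => y0.
  by rewrite -(mulmxKtV x P_unitary) // y0 mul0mx.
rewrite (bigD1 j0) //=; apply: ltr_wpDr.
  by apply: sumr_ge0 => j _; apply: term_ge0.
have lt_td : t < d 0 j0.
  by apply: contraNT y_j0 => j0NS; rewrite (eigenrows_coord xS).
by rewrite mulr_gt0 ?exprn_gt0 ?normr_gt0 // subr_gt0.
Qed.
End UnitaryDiagonalization.

Lemma card_spectrum_le_gt (C : numClosedFieldType) n (Pk Pl : 'M[C]_n)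
    (dk dl : 'rV[C]_n) t :
  Pk \is unitarymx -> Pl \is unitarymx ->
  (forall x : 'rV[C]_n,
     (x *m (invmx Pk *m diag_mx dk *m Pk) *m x^t*) 0 0
       <= (x *m (invmx Pl *m diag_mx dl *m Pl) *m x^t*) 0 0) ->
  (#|[pred j | (dl 0 j <= t)%R]| + #|[pred j | (t < dk 0 j)%R]| <= n)%N.
Proof.
move=> Pk_unitary Pl_unitary le_form; rewrite leqNgt; apply/negP => gt_n.
pose Ul := eigenrows Pl [pred j | (dl 0 j <= t)%R].
pose Wk := eigenrows Pk [pred j | (t < dk 0 j)%R].
have /rowV0Pn [x] : (Ul :&: Wk)%MS != 0.
  rewrite -mxrank_eq0 -lt0n; have := mxrank_sum_cap Ul Wk.
  have := rank_leq_col (Ul + Wk)%MS; rewrite !mxrank_eigenrows // => le_n sumE.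
  move: gt_n; rewrite -sumE lt0n => lt_n; apply: contraTneq lt_n => ->.
  by rewrite addn0 -leqNgt.
rewrite sub_capmx => /andP [xUl xWk] x_neq0.
have shift (L : 'M[C]_n) : (x *m (L - t%:M) *m x^t*) 0 0
               = (x *m L *m x^t*) 0 0 - t * (x *m x^t*) 0 0.
  by rewrite mulmxBr mulmxBl mul_mx_scalar -scalemxAl !mxE.
have := le_form x; rewrite -(lerD2r (- (t * (x *m x^t*) 0 0))) -!shift.
have := eigenrows_shift_form_gt0 Pk_unitary x_neq0 xWk.
have := eigenrows_shift_form_le0 Pl_unitary xUl.
by move=> le0 gt0 /(lt_le_trans gt0)/lt_le_trans/(_ le0); rewrite ltxx.
Qed.

Section RealSymmetric.
Variable R : rcfType.
Local Notation mxC := (map_mx (real_complex R)).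

Lemma real_symmetric_spectral n (A : 'M[R]_n) : A^T = A ->
  exists2 P : 'M[R[i]]_n, P \is unitarymx &
    exists d : 'rV[R]_n, mxC A = invmx P *m diag_mx (mxC d) *m P.
Proof.
move=> symA; have herm : mxC A \is hermsymmx.
  apply: realsym_hermsym.
    by apply/is_hermitianmxP; rewrite expr0 scale1r map_mx_id // map_trmx symA.
  by apply/mxOverP => i j; rewrite mxE; apply/complex_realP; exists (A i j).
exists (spectralmx (mxC A)); first exact: spectral_unitarymx.
exists (map_mx (@complex.Re R) (spectral_diag (mxC A))).
have /orthomx_spectralP {1}-> := hermitian_normalmx herm.
congr (_ *m diag_mx _ *m _); apply/matrixP => i j; rewrite !mxE RRe_real //.
exact: mxOverP (hermitian_spectral_diag_real herm) i j.
Qed.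

Lemma char_poly_unitary_diag n (A : 'M[R]_n) (P : 'M[R[i]]_n) (d : 'rV[R]_n) :
  P \is unitarymx -> mxC A = invmx P *m diag_mx (mxC d) *m P ->
  char_poly A = \prod_(x <- [seq d 0 j | j <- enum 'I_n]) ('X - x%:P).
Proof.
move=> P_unitary AE; apply: (@map_poly_inj _ _ (real_complex R)).
rewrite map_char_poly AE char_poly_conj ?unitarymx_unit // char_poly_trig //.
rewrite rmorph_prod big_map big_enum; apply: eq_bigr => j _.
by rewrite !mxE eqxx mulr1n rmorphB /= map_polyX map_polyC.
Qed.
End RealSymmetric.

Section Eigenvalues.
Variable R : realType.
Local Notation mxC := (map_mx (real_complex R)).

Lemma psd_form_complex n (N : 'M[R]_n) : N^T = N -> psd N ->
  forall x : 'rV[R[i]]_n, 0 <= (x *m mxC N *m x^t*) 0 0.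
Proof.
move=> symN psdN x.
(* With x = a + i b, the cross terms cancel because N is symmetric. *)
pose a := map_mx (@complex.Re R) x; pose b := map_mx (@complex.Im R) x.
have xE : x = mxC a + 'i%C *: mxC b.
  by apply/matrixP => i j; rewrite !mxE [LHS]complexE mulrC.
have xCE : x^t* = (mxC a)^T - 'i%C *: (mxC b)^T.
  have conjCr (r : R) : (real_complex R r)^* = real_complex R r.
    by apply/eqP; rewrite eq_complex /= oppr0 !eqxx.
  have conjCi : ('i%C : R[i])^* = - 'i%C.
    by apply/eqP; rewrite eq_complex /= oppr0 !eqxx.
  rewrite xE; apply/matrixP => i j; rewrite !mxE rmorphD rmorphM /=.
  by rewrite !conjCr conjCi mulNr.
have formC (u v : 'rV[R]_n) :
    mxC u *m mxC N *m (mxC v)^T = mxC (u *m N *m v^T).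
  by rewrite map_trmx -!map_mxM.
have form_sym : b *m N *m a^T = a *m N *m b^T.
  have tr11 (M : 'M[R]_1) : M^T = M by apply/matrixP => i j; rewrite !ord1 mxE.
  by rewrite -[LHS]tr11 !trmx_mul !trmxK symN mulmxA.
have form_ge0 (u : 'rV[R]_n) : 0 <= (u *m N *m u^T) 0 0.
  by have := psdN u^T; rewrite trmxK.
rewrite {1}xE xCE !mulmxDl !mulmxBr -!scalemxAl -!scalemxAr !formC form_sym.
rewrite !mxE mulrA -expr2 sqr_i mulN1r opprK addrA subrK -rmorphD /=.
rewrite -[0](rmorph0 (real_complex R)) lecR.
by apply: addr_ge0; [move: (form_ge0 a) | move: (form_ge0 b)]; rewrite !mxE.
Qed.

Lemma eig_asc_exists n (L : 'M[R]_n) : L^T = L -> exists s, eig_asc L s.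
Proof.
move=> symL; have [P P_unitary [d LE]] := real_symmetric_spectral symL.
exists (sort <=%R [seq d 0 j | j <- enum 'I_n]); split.
- by rewrite size_sort size_map size_enum_ord.
- exact/sort_sorted/le_total.
- rewrite (char_poly_unitary_diag P_unitary LE).
  by apply: perm_big; rewrite perm_sym perm_sort.
Qed.

Lemma eig_asc_perm n (L : 'M[R]_n) (P : 'M[R[i]]_n) (d : 'rV[R]_n) s :
  P \is unitarymx -> mxC L = invmx P *m diag_mx (mxC d) *m P ->
  eig_asc L s -> perm_eq s [seq d 0 j | j <- enum 'I_n].
Proof.
move=> P_unitary LE [_ _ charL]; apply: prod_XsubC_eq.
by rewrite -charL (char_poly_unitary_diag P_unitary LE).
Qed.

Lemma count_eig_asc_mono n (Lk Ll : 'M[R]_n) sk sl t :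
  Lk^T = Lk -> Ll^T = Ll -> loewner_le Lk Ll ->
  eig_asc Lk sk -> eig_asc Ll sl ->
  (count (fun x => (x <= t)%R) sl <= count (fun x => (x <= t)%R) sk)%N.
Proof.
move=> symk syml le_kl eigk eigl.
have [Pk Pk_unitary [dk LkE]] := real_symmetric_spectral symk.
have [Pl Pl_unitary [dl LlE]] := real_symmetric_spectral syml.
rewrite (permP (eig_asc_perm Pk_unitary LkE eigk)).
rewrite (permP (eig_asc_perm Pl_unitary LlE eigl)).
rewrite !count_map -enumT !count_enum.
have le_form (x : 'rV[R[i]]_n) :
    (x *m mxC Lk *m x^t*) 0 0 <= (x *m mxC Ll *m x^t*) 0 0.
  have symB : (Ll - Lk)^T = Ll - Lk by rewrite linearB /= symk syml.
  have := psd_form_complex symB le_kl x.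
  by rewrite map_mxB mulmxBr mulmxBl mxE [X in _ + X]mxE subr_ge0.
rewrite LkE LlE in le_form.
have := card_spectrum_le_gt (real_complex R t) Pk_unitary Pl_unitary le_form.
have -> : #|[pred j | (mxC dl 0 j <= real_complex R t)%R]|
          = #|[pred j | dl 0 j <= t]|.
  by apply: eq_card => j; rewrite !inE mxE lecR.
have -> : #|[pred j | (real_complex R t < mxC dk 0 j)%R]|
          = #|predC [pred j | dk 0 j <= t]|.
  by apply: eq_card => j; rewrite !inE mxE ltcR ltNge.
move=> le_n; rewrite -(leq_add2r #|predC [pred j | dk 0 j <= t]|).
by rewrite cardC card_ord.
Qed.

Lemma eig_asc_mono n (Lk Ll : 'M[R]_n) sk sl :
  Lk^T = Lk -> Ll^T = Ll -> loewner_le Lk Ll ->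
  eig_asc Lk sk -> eig_asc Ll sl -> forall i, (i < n)%N -> sk`_i <= sl`_i.
Proof.
move=> symk syml le_kl eigk eigl i lt_in.
have [size_k sorted_k _] := eigk; have [size_l sorted_l _] := eigl.
apply: sorted_nth_le_count => //; first by rewrite size_k size_l.
  by rewrite size_k.
by move=> t; apply: count_eig_asc_mono symk syml le_kl eigk eigl.
Qed.
End Eigenvalues.

Section Laplacian.
Variables (R : realType) (q D m : nat) (A B : 'M[R]_(tdim q D, m)).

Lemma projM k l : proj R q D k *m proj R q D l = proj R q D (minn k l).
Proof.
apply/matrixP => i j; rewrite mul_diag_mx !mxE.
by case: (i =P j) => [->|_]; rewrite ?mulr0 // !mulr1n -natrM leq_min mulnb.
Qed.

Lemma LapE k : Lap A B k = (B - A)^T *m proj R q D k *m (B - A).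
Proof.
rewrite /Lap /pbnd trmx_mul tr_diag_mx -/(proj R q D k) -!mulmxA.
by rewrite [proj _ _ _ k *m _]mulmxA projM minnn.
Qed.

Lemma psd_projB k l : (k <= l)%N -> psd (proj R q D l - proj R q D k).
Proof.
move=> le_kl; rewrite /proj -linearB /=; apply: psd_diag_mx => j.
rewrite !mxE subr_ge0 ler_nat.
by case: (boolP (wdeg j <= k)%N) => // le_jk; rewrite (leq_trans le_jk le_kl).
Qed.

Lemma Lap_loewner k l : (k <= l)%N -> loewner_le (Lap A B k) (Lap A B l).
Proof.
move=> le_kl; rewrite /loewner_le !LapE -mulmxBl -mulmxBr.
exact/psd_conj/psd_projB.
Qed.

Lemma trmx_Lap k : (Lap A B k)^T = Lap A B k.
Proof. by rewrite /Lap trmx_mul trmxK. Qed.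
End Laplacian.

Section Macrograph.
Variables (R : realType) (q D m : nat) (A B : 'M[R]_(tdim q D, m)).

Lemma colA_in_Vmac e : col e A \in Vmac A B.
Proof. by rewrite mem_undup mem_cat (map_f (fun i => col i A)) ?mem_enum. Qed.

Lemma colB_in_Vmac e : col e B \in Vmac A B.
Proof.
by rewrite mem_undup mem_cat (map_f (fun i => col i B)) ?mem_enum ?orbT.
Qed.

Definition macro_tail e : 'I_(size (Vmac A B)) :=
  Ordinal (etrans (index_mem _ _) (colA_in_Vmac e)).
Definition macro_head e : 'I_(size (Vmac A B)) :=
  Ordinal (etrans (index_mem _ _) (colB_in_Vmac e)).

Lemma Bmac_incidence : Bmac A B = incidence_mx R macro_tail macro_head.
Proof. by apply/matrixP => i e; rewrite !mxE. Qed.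

Lemma c_macro_incidence :
  c_macro A B = n_comp (incidence_rel macro_tail macro_head) predT.
Proof. by []. Qed.

Lemma sub_Phimac_Bmac : B - A = Phimac A B *m Bmac A B.
Proof.
rewrite Bmac_incidence mulmx_incidence; apply/matrixP => j e.
by rewrite !mxE /= !nth_index ?colA_in_Vmac ?colB_in_Vmac // !mxE.
Qed.

Lemma mxrank_Bmac : \rank (Bmac A B) = (size (Vmac A B) - c_macro A B)%N.
Proof. by rewrite Bmac_incidence mxrank_incidence c_macro_incidence. Qed.

Lemma mxrank_Lap k :
  (\rank (Lap A B k))%:Z
    = (size (Vmac A B))%:Z - (c_macro A B)%:Z - (delta A B k)%:Z.
Proof.
rewrite /Lap mxrank_gram -mxrank_tr /pbnd sub_Phimac_Bmac mulmxA trmx_mul.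
have := mxrank_mul_ker (Bmac A B)^T ((proj R q D k *m Phimac A B)^T).
rewrite -/(delta A B k) mxrank_tr mxrank_Bmac.
have le_c : (c_macro A B <= size (Vmac A B))%N.
  by apply: leq_trans (max_card _) _; rewrite card_ord.
by move=> rk; rewrite (subzn le_c) -rk PoszD addrK.
Qed.
End Macrograph.

Unset Implicit Arguments.

Theorem theorem6p10 (R : realType) (q D m : nat)
    (A B : 'M[R]_(tdim q D, m)) (k : nat) :
  [/\ sym_mx (Lap A B k) /\ psd (Lap A B k),
      forall x : 'cV[R]_m, Lap A B k *m x = 0 <-> pbnd A B k *m x = 0,
      (\rank (Lap A B k))%:Z
        = (size (Vmac A B))%:Z - (c_macro A B)%:Z - (delta A B k)%:Z
    & forall l : nat, (k <= l)%N ->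
        [/\ loewner_le (Lap A B k) (Lap A B l),
            exists s, eig_asc (Lap A B k) s
          & forall sk sl : seq R, eig_asc (Lap A B k) sk ->
              eig_asc (Lap A B l) sl ->
              forall i : nat, (i < m)%N -> sk`_i <= sl`_i]].
Proof.
split.
- by split; [exact: trmx_Lap | exact: psd_gram].
- by move=> x; exact: gram_mulmx_eq0.
- exact: mxrank_Lap.
move=> l le_kl; split.
- exact: Lap_loewner.
- exact/eig_asc_exists/trmx_Lap.
- move=> sk sl.
  exact: eig_asc_mono (trmx_Lap A B k) (trmx_Lap A B l) (Lap_loewner A B le_kl).
Qed.
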